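(* Let $\lambda\in\mathcal P_\epsilon(N)$ and suppose Case 2 of the Kempken–Spaltenstein algorithm occurs for $\lambda$ at index $i$. Then $\Delta(\lambda^{(i)})=\Delta(\lambda)\setminus\{(i,i+1)\}$. If moreover $(i,i+1)$ is a good 2-step of $\lambda$, then $s(\lambda^{(i)})=s(\lambda)$.
   Context: $\mathcal P_\epsilon(N)$ ($\epsilon=\pm1$) is the set of partitions $\lambda=(\lambda_1\ge\dots\ge\lambda_n\ge1)$ of $N$ in which every part $m$ with $\epsilon(-1)^m=1$ occurs with even multiplicity; conventions $\lambda_0=0$, $\lambda_i=0$ for $i>n$. $s(\lambda)=\sum_{i=1}^n\lfloor(\lambda_i-\lambda_{i+1})/2\rfloor$. A 2-step of $\lambda$ is a pair $(i,i+1)$, $1\le i<n$, with $\epsilon(-1)^{\lambda_i}=\epsilon(-1)^{\lambda_{i+1}}=-1$, $\lambda_{i-1}\ne\lambda_i$, $\lambda_{i+1}\ne\lambda_{i+2}$; $\Delta(\lambda)$ is the set of 2-steps. A 2-step $(i,i+1)$ is bad if ($i>1$ and $\lambda_{i-1}-\lambda_i$ is even) or $\lambda_{i+1}-\lambda_{i+2}$ is even, and good otherwise. Case 2 occurs at $i$ if $(i,i+1)\in\Delta(\lambda)$ and $\lambda_i=\lambda_{i+1}$; then $\lambda^{(i)}=(\lambda_1-2,\dots,\lambda_{i-1}-2,\lambda_i-1,\lambda_{i+1}-1,\lambda_{i+2},\dots,\lambda_n)$ with zero parts discarded, an element of $\mathcal P_\epsilon(N-2i)$. *)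

From mathcomp Require Import all_boot all_order all_algebra.
Set Implicit Arguments. Unset Strict Implicit. Unset Printing Implicit Defensive.
Import GRing.Theory Num.Theory.

(* A partition lambda = (lambda_1 >= ... >= lambda_n >= 1) is the list
   [:: lambda_1; ...; lambda_n].  Indices are 1-based:
   part s 0 = 0 (convention lambda_0 = 0), part s i = lambda_i for 1 <= i <= n,
   part s i = 0 for i > n. *)
Definition part (s : seq nat) (i : nat) : nat :=
  if i is j.+1 then nth 0%N s j else 0%N.

Definition sgn (eps : int) (m : nat) : int := (eps * (-1) ^+ m)%R.

Definition inP (eps : int) (N : nat) (s : seq nat) : Prop :=
  [/\ sorted geq s, all (fun x => 0 < x)%N s, sumn s = N &
      forall m : nat, sgn eps m = 1%R -> ~~ odd (count_mem m s)].

Definition sfun (s : seq nat) : nat :=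
  \sum_(1 <= i < (size s).+1) ((part s i - part s i.+1) %/ 2).

Definition is2step (eps : int) (s : seq nat) (i : nat) : bool :=
  [&& (1 <= i)%N, (i < size s)%N,
      sgn eps (part s i) == (-1)%R, sgn eps (part s i.+1) == (-1)%R,
      part s i.-1 != part s i & part s i.+1 != part s i.+2].

Definition bad2step (s : seq nat) (i : nat) : bool :=
  ((1 < i)%N && ~~ odd (part s i.-1 - part s i)) ||
  ~~ odd (part s i.+1 - part s i.+2).

Definition good2step (eps : int) (s : seq nat) (i : nat) : bool :=
  is2step eps s i && ~~ bad2step s i.

Definition case2 (eps : int) (s : seq nat) (i : nat) : bool :=
  is2step eps s i && (part s i == part s i.+1).

Definition lam_i (s : seq nat) (i : nat) : seq nat :=
  filter (fun x => 0 < x)%N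
    [seq (let k := j.+1 in
          if (k < i)%N then part s k - 2
          else if (k == i) || (k == i.+1) then part s k - 1
          else part s k)
    | j <- iota 0 (size s)].

From mathcomp Require Import all_boot all_order all_algebra.
From mathcomp Require Import zify.
Import GRing.Theory Num.Theory.

(* We work with the part function p = part lambda (p 0 = 0, p nonincreasing
   on positive indices).  Discarding zero parts does not move any index, so
   the part function of lambda^(i) is [lower p i]: p minus 2 below i, minus 1
   at i and i+1, unchanged above (Lemma [part_lam_i]).

   Whether (j, j+1) is a 2-step only depends on the window of four parts
   p (j-1), p j, p (j+1), p (j+2) ([window], [step2]).  For the second claim, the lowering only shrinks by one the gaps
   p (i-1) - p i and p (i+1) - p (i+2) ([lower_gap]); when these are odd
   (a good 2-step) every summand floor((p k - p (k+1))/2) of s is unchanged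
   ([lower_half_diff]). *)

(* The parity/difference conditions for (j, j+1) to be a 2-step, in terms of
   the parts x = p (j-1), y = p j, z = p (j+1), w = p (j+2); b is the parity
   of the parts m with eps (-1)^m = -1. *)
Definition window (b : bool) (x y z w : nat) : bool :=
  [&& 0 < z, odd y == b, odd z == b, x != y & z != w].

Definition step2 (b : bool) (p : nat -> nat) (j : nat) : bool :=
  (0 < j) && window b (p j.-1) (p j) (p j.+1) (p j.+2).

(* The part function of lambda^(i), before zero parts are discarded. *)
Definition lower (p : nat -> nat) (i k : nat) : nat :=
  if k == 0 then 0 else if k < i then p k - 2
  else if (k == i) || (k == i.+1) then p k - 1 else p k.

Lemma window_odd2F b x y z w : odd y != b -> window b x y z w = false.
Proof. by rewrite /window => /negbTE ->; rewrite !andbF. Qed.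

Lemma window_odd3F b x y z w : odd z != b -> window b x y z w = false.
Proof. by rewrite /window => /negbTE ->; rewrite !andbF. Qed.

Lemma window_eq12F b x z w : window b x x z w = false.
Proof. by rewrite /window eqxx !andbF. Qed.

Lemma window_eq34F b x y z : window b x y z z = false.
Proof. by rewrite /window eqxx !andbF. Qed.

(* Lowering a whole window by 2 is harmless when all its parts, except
   possibly a leading 0 = p 0, stay above a part c of parity b. *)
Lemma window_sub2 b c x y z w :
  0 < c -> odd c = b -> c < w <= z -> z <= y -> (x = 0 \/ y <= x) ->
  window b (x - 2) (y - 2) (z - 2) (w - 2) = window b x y z w.
Proof.
move=> c_pos odd_c cwz zy xy; rewrite /window.
by apply/idP/idP => /and5P[? ? ? ? ?]; apply/and5P; split; lia.
Qed.

(* The window ending at index i: the last part drops by 1 only. *)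
Lemma window_sub2_last1 b x y z w :
  0 < w -> odd w = b -> w < z <= y -> (x = 0 \/ y <= x) ->
  window b (x - 2) (y - 2) (z - 2) (w - 1) = window b x y z w.
Proof.
move=> w_pos odd_w wzy xy; rewrite /window.
by apply/idP/idP => /and5P[? ? ? ? ?]; apply/and5P; split; lia.
Qed.

(* The window starting at index i+1: the first part drops by 1 only. *)
Lemma window_first1 b x y z w :
  y < x -> odd x = b -> window b (x - 1) y z w = window b x y z w.
Proof.
move=> yx odd_x; rewrite /window.
by apply/idP/idP => /and5P[? ? ? ? ?]; apply/and5P; split; lia.
Qed.

Section Lowering.
Variables (p : nat -> nat) (i : nat).
Hypothesis p0 : p 0 = 0.

Lemma lower_lt k : k < i -> lower p i k = p k - 2.
Proof. by rewrite /lower; case: eqP => [->|_ ->]; rewrite ?p0. Qed.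

Lemma lower_at k : 0 < k -> i <= k <= i.+1 -> lower p i k = p k - 1.
Proof.
rewrite /lower => k_pos ik; rewrite ifF; last lia.
by rewrite ifF; [rewrite ifT //|]; lia.
Qed.

Lemma lower_gt k : i.+1 < k -> lower p i k = p k.
Proof. by rewrite /lower => ik; rewrite !ifF //; lia. Qed.

End Lowering.

(* The situation of Case 2 at index i, on the part function p: (i, i+1) is a
   2-step of parity b (a part of parity b being one with eps (-1)^m = -1)
   with p i = p (i+1). *)
Section CaseTwo.
Variables (p : nat -> nat) (i : nat) (b : bool).
Hypothesis p0 : p 0 = 0.
Hypothesis p_noninc : forall a c, 0 < a <= c -> p c <= p a.
Hypothesis i_pos : 0 < i.
Hypothesis p_succ_i_pos : 0 < p i.+1.
Hypothesis odd_p_i : odd (p i) = b.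
Hypothesis p_eq : p i = p i.+1.
Hypothesis p_neq_prev : p i.-1 != p i.
Hypothesis p_neq_next : p i.+1 != p i.+2.

Lemma p_succ k : 0 < k -> p k.+1 <= p k.
Proof. by move=> k_pos; apply: p_noninc; lia. Qed.

Lemma p_pred k : 0 < k -> p k.-1 = 0 \/ p k <= p k.-1.
Proof.
case: k => [|[|k]] // _; first by left.
by right; apply: p_noninc; lia.
Qed.

Lemma p_lt_pred : 1 < i -> p i < p i.-1.
Proof.
move=> i_gt1; have : p i <= p i.-1 by apply: p_noninc; lia.
lia.
Qed.

Lemma p_next_lt : p i.+2 < p i.+1.
Proof. by have := p_succ i.+1 isT; lia. Qed.

Lemma lower_gap k : 0 < k ->
  lower p i k.+1 + (p k - p k.+1) = lower p i k + ((k.+1 == i) || (k == i.+1)).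
Proof.
move=> k_pos; move: (p_eq) (p_succ_i_pos) p_lt_pred p_next_lt (p_succ k k_pos).
have : k.+1 < i \/ k.+1 = i \/ k = i \/ k = i.+1 \/ i.+1 < k by lia.
case=> [h|[<-|[->|[->|h]]]] /= => eq_pi pi1_pos lt_pred lt_next le_k.
- have far : p i < p k.+1 by apply: (leq_trans (lt_pred _)); [lia | apply: p_noninc; lia].
  by rewrite !lower_lt //; lia.
- by rewrite [lower _ _ k.+1]lower_at ?lower_lt //; lia.
- by rewrite !lower_at //; lia.
- by rewrite lower_gt ?lower_at //; lia.
- by rewrite !lower_gt //; lia.
Qed.

(* Hence lambda^(i) is again nonincreasing, so its zero parts form a suffix. *)
Lemma lower_noninc k : 0 < k -> lower p i k.+1 <= lower p i k.
Proof.
move=> k_pos; have := lower_gap k k_pos.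
have : k.+1 = i -> p k.+1 < p k by move=> ki; move: p_lt_pred; rewrite -ki; apply.
have : k = i.+1 -> p k.+1 < p k by move=> ->; apply: p_next_lt.
lia.
Qed.

Lemma step2_lower j : step2 b (lower p i) j = step2 b p j && (j != i).
Proof.
rewrite /step2; case: (posnP j) => [-> //|j_pos] /=.
move: (odd_p_i) (p_eq) (p_succ_i_pos) p_lt_pred p_next_lt
  (p_succ j j_pos) (p_succ j.+1 isT) (p_pred j j_pos).
have : j.+2 < i \/ j.+2 = i \/ j.+1 = i \/ j = i \/ j = i.+1 \/ j = i.+2 \/ i.+2 < j
  by lia.
case=> [h|[<-|[<-|[->|[->|[->|h]]]]]] /=
  => odd_pi eq_pi pi1_pos lt_pred lt_next le_j le_j1 le_jm.
- have far : p i.-1 <= p j.+2 by apply: p_noninc; lia.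
  rewrite (_ : j != i) ?andbT; last lia.
  by rewrite !lower_lt; first apply: (@window_sub2 _ (p i)); lia.
- rewrite (_ : j != j.+2) ?andbT; last lia.
  rewrite [lower _ _ j.+2]lower_at ?lower_lt //; try lia.
  by apply: window_sub2_last1; lia.
- by rewrite eq_pi window_eq34F [lower _ _ j.+1]lower_at ?window_odd3F //; lia.
- by rewrite eqxx andbF [lower _ _ i]lower_at ?window_odd2F //; lia.
- by rewrite eq_pi window_eq12F [lower _ _ i.+1]lower_at ?window_odd2F //; lia.
- rewrite (_ : i.+2 != i) ?andbT; last lia.
  rewrite [lower _ _ i.+1]lower_at ?lower_gt //; try lia.
  by apply: window_first1; lia.
- rewrite (_ : j != i) ?andbT; last lia.
  by rewrite !lower_gt //; lia.
Qed.

Lemma lower_half_diff k :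
  (1 < i -> odd (p i.-1 - p i)) -> odd (p i.+1 - p i.+2) -> 0 < k ->
  (lower p i k - lower p i k.+1) %/ 2 = (p k - p k.+1) %/ 2.
Proof.
move=> odd_prev odd_next k_pos.
have := lower_gap k k_pos; have := lower_noninc k k_pos; have := p_succ k k_pos.
have : k.+1 = i -> odd (p k - p k.+1) by move=> ki; move: odd_prev; rewrite -ki; apply.
have : k = i.+1 -> odd (p k - p k.+1) by move=> ->.
lia.
Qed.

End CaseTwo.

(* The section parameters are determined by the Case 2 hypotheses. *)
Arguments lower_noninc {p i b}.
Arguments step2_lower {p i b}.
Arguments lower_half_diff {p i b}.

Lemma part_noninc {s : seq nat} :
  sorted geq s -> forall a c, 0 < a <= c -> part s c <= part s a.
Proof.
move=> s_sorted [|a] [|c] //= ac.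
have [c_lt | c_ge] := ltnP c (size s); last by rewrite nth_default.
have geq_trans : transitive geq by move=> x y z /= yx zy; apply: leq_trans zy yx.
by apply: (sorted_leq_nth geq_trans leqnn 0 s_sorted); rewrite ?inE /=; lia.
Qed.

Lemma size_part (s : seq nat) j :
  all (fun x => 0 < x) s -> (j < size s) = (0 < part s j.+1).
Proof.
move=> s_pos /=; have [j_lt | j_ge] := ltnP j (size s).
  by rewrite (allP s_pos) // mem_nth.
by rewrite nth_default.
Qed.

Lemma sgn_eqN1 (eps : int) m : eps = 1%R \/ eps = (-1)%R ->
  (sgn eps m == (-1)%R) = (odd m == (eps == 1%R)).
Proof.
by case=> ->; rewrite /sgn -signr_odd; case: (odd m); rewrite ?mul1r ?mulN1r.
Qed.

Lemma is2step_step2 (eps : int) (s : seq nat) j :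
  eps = 1%R \/ eps = (-1)%R -> all (fun x => 0 < x) s ->
  is2step eps s j = step2 (eps == 1%R) (part s) j.
Proof.
by move=> eps_pm s_pos; rewrite /is2step !sgn_eqN1 // size_part.
Qed.

Lemma nth_filter_pos (t : seq nat) :
  (forall j, nth 0 t j = 0 -> nth 0 t j.+1 = 0) ->
  forall j, nth 0 [seq x <- t | 0 < x] j = nth 0 t j.
Proof.
elim: t => [|x t IHt] zero_suffix j //=.
have zero_suffix_t j' : nth 0 t j' = 0 -> nth 0 t j'.+1 = 0 := zero_suffix j'.+1.
case: (posnP x) => [x0 | x_pos]; last by case: j => //= j; apply: IHt.
have t0 j' : nth 0 t j' = 0.
  elim: j' => [|j' IHj]; first exact: (zero_suffix 0).
  exact: zero_suffix_t.
by rewrite (IHt zero_suffix_t) t0 x0; case: j => //= j; rewrite t0.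
Qed.

Lemma part_lam_i (lam : seq nat) i :
  (forall k, 0 < k -> lower (part lam) i k.+1 <= lower (part lam) i k) ->
  part (lam_i lam i) =1 lower (part lam) i.
Proof.
move=> lower_sorted [|k] //=; rewrite /lam_i.
set t := map _ _.
have nth_t j : nth 0 t j = lower (part lam) i j.+1.
  have [j_lt | j_ge] := ltnP j (size lam).
    by rewrite (nth_map 0) ?size_iota // nth_iota.
  rewrite nth_default ?size_map ?size_iota // /lower /= nth_default //.
  by case: ifP => //; case: ifP.
rewrite nth_filter_pos ?nth_t // => j; rewrite !nth_t.
by have := lower_sorted j.+1 isT; lia.
Qed.

Lemma sfun_big {s : seq nat} {M : nat} : size s <= M ->
  sfun s = \sum_(1 <= k < M.+1) ((part s k - part s k.+1) %/ 2).
Proof.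
move=> sM; rewrite /sfun (@big_cat_nat _ _ _ (size s).+1 1 M.+1) //=.
rewrite [X in _ = _ + X](_ : _ = 0) ?addn0 //.
rewrite big_nat_cond big1 // => -[|k] /andP[/andP[k_gt _] _] //.
by rewrite /= !nth_default //; lia.
Qed.

Theorem mainTheorem8 (eps : int) (N : nat) (lam : seq nat) (i : nat) :
  (eps = 1%R \/ eps = (-1)%R) ->
  inP eps N lam ->
  case2 eps lam i ->
  (forall j : nat, is2step eps (lam_i lam i) j <-> (is2step eps lam j /\ j <> i))
  /\ (good2step eps lam i -> sfun (lam_i lam i) = sfun lam).
Proof.
move=> eps_pm [lam_sorted lam_pos _ _].
rewrite /case2 is2step_step2 // => /andP[/andP[i_pos]].
set p := part lam; set b := (eps == 1%R).
move=> /and5P[pi1_pos /eqP odd_pi _ ne_prev ne_next] /eqP p_eq.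
have p_noninc := part_noninc lam_sorted.
have p0 : p 0 = 0 by [].
have lower_lam : part (lam_i lam i) =1 lower p i.
  exact/part_lam_i/(lower_noninc p0 p_noninc i_pos pi1_pos odd_pi p_eq ne_prev ne_next).
split=> [j | /andP[_]].
- rewrite !is2step_step2 //; last exact: filter_all.
  rewrite (_ : step2 _ _ j = step2 b (lower p i) j); last by rewrite /step2 !lower_lam.
  rewrite (step2_lower p0 p_noninc i_pos pi1_pos odd_pi p_eq ne_prev ne_next).
  by split=> [/andP[-> /eqP] | [-> /eqP]].
- rewrite /bad2step negb_or negb_and !negbK => /andP[good_prev good_next].
  have size_lam_i : size (lam_i lam i) <= size lam.
    by rewrite size_filter (leq_trans (count_size _ _)) // size_map size_iota.
  rewrite (sfun_big size_lam_i) (sfun_big (leqnn _)).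
  apply: eq_big_nat => k /andP[k_pos _]; rewrite !lower_lam.
  apply: (lower_half_diff p0 p_noninc i_pos pi1_pos odd_pi p_eq ne_prev ne_next) => //.
  by move=> i_gt1; move: good_prev; rewrite i_gt1.
Qed.
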